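(* Let $T$ be a repeater tree with root $r$, and let $n$ be the number of $g$-type vertices of $T$. For each $h$-type vertex $h$ of $T$ let $c(h)$ be its unique child. Apply to $T$ the operations $X_h := LC_{c(h)}\,Z_h\,LC_h\,LC_{c(h)}$, one for every $h$-type vertex $h$, in an order in which every $h$-type vertex is processed before any $h$-type vertex of strictly smaller depth. Then the resulting graph is the star graph with center $r$ whose vertex set is exactly the set of $n$ $g$-type vertices of $T$. Consequently, if a graph $G$ has $T$ as a vertex-minor, then an $n$-qubit GHZ state can be obtained from the graph state $|G\rangle$ by local Pauli measurements and local Clifford operations.
   Context: All graphs are finite, simple and undirected; $N^G_a$ is the neighbourhood of $a$ in $G$. $Z_v(G)=G-v$ is vertex deletion. $LC_v(G)=(V,E\,\Delta\,K_{N^G_v})$ is local complementation ($K_{N^G_v}$ = edge set of the complete graph on $N^G_v$, $\Delta$ = symmetric difference); operators are applied right to left. A vertex-minor of $G$ is a graph obtained from $G$ by a sequence of vertex deletions and local complementations. A star graph with center $a$ is a graph in which $a$ is adjacent to every other vertex and no other edges exist. The graph state of $G=(V,E)$ is $|G\rangle=\prod_{(i,j)\in E}CZ_{i,j}|+\rangle^{\otimes V}$; local complementations correspond to local Clifford operations, a $Z$-measurement of qubit $v$ corresponds to $Z_v$, and an $X$-measurement of qubit $v$ corresponds (up to local Clifford corrections) to $LC_wZ_vLC_vLC_w$ for a neighbour $w$ of $v$; the graph state of a star graph is local-Clifford equivalent to a GHZ state on the same qubits (via Hadamards on the non-center qubits). Repeater tree: a rooted tree each of whose vertices is labelled $g$-type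 or $h$-type such that (1) the root and all leaves are $g$-type; (2) every root-to-leaf path has type pattern $g_0,h_1,g_1,h_2,\dots,h_{k-1},g_{k-1},g_k$ for some $k\ge1$ (for $k=1$ the path is $g_0,g_1$), where $g_i$ are $g$-type and $h_i$ are $h$-type; (3) every $h$-type vertex has exactly one child; (4) the subtree rooted at any non-leaf $g$-type vertex, with the inherited labels, is again a repeater tree. *)

From mathcomp Require Import all_boot.
Set Implicit Arguments. Unset Strict Implicit. Unset Printing Implicit Defensive.

Section Graphs.
Variable T : finType.

(* A finite simple graph on a vertex set V ⊆ T: (V, E) with E a set of 2-subsets of V. *)
Definition graph := ({set T} * {set {set T}})%type.

Definition wf_graph (G : graph) : Prop :=
  forall e, e \in G.2 ->
    exists a b, [/\ a \in G.1, b \in G.1, a != b & e = [set a; b]].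

Definition nbhd (G : graph) (a : T) : {set T} :=
  [set b in G.1 | (b != a) && ([set a; b] \in G.2)].

Definition Zop (v : T) (G : graph) : graph :=
  (G.1 :\ v, [set e in G.2 | v \notin e]).

Definition clique (A : {set T}) : {set {set T}} :=
  [set [set a; b] | a in A, b in A & a != b].

Definition symdiff (A B : {set {set T}}) := (A :\: B) :|: (B :\: A).

Definition LCop (v : T) (G : graph) : graph :=
  (G.1, symdiff G.2 (clique (nbhd G v))).

(* a graph operation: (true, v) = LC_v, (false, v) = Z_v;
   a list of operations is applied from head to tail (i.e. the head acts first) *)
Definition gop (o : bool * T) (G : graph) : graph :=
  if o.1 then LCop o.2 G else Zop o.2 G.

Definition apply_ops (G : graph) (ops : seq (bool * T)) : graph :=
  foldl (fun H o => gop o H) G ops.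

Definition vertex_minor (H G : graph) : Prop :=
  exists ops, apply_ops G ops = H.

Definition star (W : {set T}) (a : T) : graph :=
  (W, [set [set a; v] | v in W :\ a]).

Definition rooted_tree (V : {set T}) (r : T) (par : T -> T) : Prop :=
  [/\ r \in V, par r = r, {in V, forall v, par v \in V} &
      {in V, forall v, exists n, iter n par v = r}].

Definition children (V : {set T}) (r : T) (par : T -> T) (u : T) : {set T} :=
  [set v in V | (v != r) && (par v == u)].

Definition is_leaf V r par u : bool := children V r par u == set0.

Definition anc (par : T -> T) (u v : T) : Prop := exists n, iter n par v = u.

Definition depth (r : T) (par : T -> T) (v : T) : nat :=
  find (fun n => iter n par v == r) (iota 0 #|T|.+1).

(* labels (true = g-type, false = h-type) along the path from u down to l *)
Definition path_labels (r : T) (par : T -> T) (g : T -> bool) (u l : T) : seq bool :=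
  rev [seq g (iter i par l) | i <- iota 0 (depth r par l - depth r par u).+1].

(* g_0, h_1, g_1, ..., h_{k-1}, g_{k-1}, g_k  with k >= 1 *)
Definition rep_pattern (s : seq bool) : Prop :=
  exists k, 0 < k /\ s = true :: flatten (nseq k.-1 [:: false; true]) ++ [:: true].

(* repeater tree; condition (4) for the subtree at a non-leaf g-type vertex u
   reduces (conditions (1),(3) being inherited) to the path pattern for all
   paths from u down to leaves below u *)
Definition repeater_tree (V : {set T}) (r : T) (par : T -> T) (g : T -> bool) : Prop :=
  [/\ rooted_tree V r par,
      g r /\ {in V, forall l, is_leaf V r par l -> g l},
      {in V, forall l, is_leaf V r par l -> rep_pattern (path_labels r par g r l)},
      {in V, forall h, ~~ g h -> #|children V r par h| = 1} &
      {in V, forall u, g u -> ~~ is_leaf V r par u ->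
         {in V, forall l, is_leaf V r par l -> anc par u l ->
            rep_pattern (path_labels r par g u l)}}].

Definition tree_graph (V : {set T}) (r : T) (par : T -> T) : graph :=
  (V, [set [set v; par v] | v in V & v != r]).

Definition child (V : {set T}) (r : T) (par : T -> T) (h : T) : T :=
  odflt h [pick v in children V r par h].

Definition Xop (c : T -> T) (h : T) (G : graph) : graph :=
  LCop (c h) (Zop h (LCop h (LCop (c h) G))).

End Graphs.

From Pilot Require Import Defs.
From mathcomp Require Import all_boot zify.
Set Implicit Arguments. Unset Strict Implicit. Unset Printing Implicit Defensive.

(* When h (with parent p and child c) is
   processed, c is adjacent only to h and to a set S of leaves: LC_c turns
   {h} ∪ S into a clique, LC_h toggles the clique on {p, c} ∪ S, and once h is
   deleted c has the single neighbour p, so the last LC_c does nothing.  The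
   net effect is to delete h and hang c and S from p.  Hence after a set P of
   h-vertices has been processed, each remaining vertex hangs from its first
   strict ancestor that is neither in P nor the child of a vertex of P (such a
   child is now a leaf).  Along a root-to-leaf path the labels alternate g, h
   up to the two final g's, so a g-vertex with a g-type parent is a leaf;
   therefore, once every h-vertex is processed, that ancestor is the root. *)

Lemma find_iota_min (p : pred nat) n k : k <= n -> p k ->
  let m := find p (iota 0 n.+1) in [/\ p m, m <= k & forall j, j < m -> ~~ p j].
Proof.
move=> kn pk m.
have ex : has p (iota 0 n.+1) by apply/hasP; exists k; rewrite ?mem_iota.
have mk : m <= k.
  rewrite leqNgt; apply/negP => /(before_find 0).
  by rewrite nth_iota // add0n pk.
have ms : m < n.+1 by rewrite -(size_iota 0 n.+1) -has_find.
split=> // [|j jm].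
- by have := nth_find 0 ex; rewrite nth_iota.
- by have := before_find 0 jm; rewrite nth_iota ?add0n //; lia.
Qed.

Lemma find_iota_eq (p : pred nat) n k : k <= n -> p k ->
  (forall j, j < k -> ~~ p j) -> find p (iota 0 n.+1) = k.
Proof.
move=> kn pk below; have [pm mk minm] := find_iota_min kn pk.
apply/eqP; rewrite eqn_leq mk leqNgt; apply/negP => /below; by rewrite pm.
Qed.

Lemma rep_pattern_nth s : rep_pattern s ->
  forall i, i < size s -> nth false s i = ~~ odd i || (i.+1 == size s).
Proof.
case=> k [_ ->]; elim: k.-1 => [|n IH]; first by case=> [|[|]].
by case=> [|[|i]] //= lt; rewrite IH // negbK.
Qed.

Lemma rep_pattern_after_h s i : rep_pattern s -> i.+1 < size s ->
  ~~ nth false s i -> nth false s i.+1.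
Proof.
move=> /rep_pattern_nth sP si; rewrite !sP //; last exact: ltnW.
by rewrite /= => /norP[/negbNE ->].
Qed.

Lemma rep_pattern_gg_last s i : rep_pattern s -> i.+1 < size s ->
  nth false s i -> nth false s i.+1 -> i.+2 = size s.
Proof.
move=> /rep_pattern_nth sP si; rewrite !sP //; last exact: ltnW.
rewrite /= negbK => /orP[oi|/eqP E]; last by move: si; rewrite -E ltnn.
by rewrite (negbTE oi) => /eqP.
Qed.

(** * Vertex-minor operations *)

Section Graphs.
Variable T : finType.
Implicit Types (G : graph T) (a b c d v : T).

Lemma eq_set2 a b c d :
  [set a; b] = [set c; d] <-> (a = c /\ b = d \/ a = d /\ b = c).
Proof.
split; last by case=> [[-> ->]|[-> ->]]; rewrite // setUC.
move=> E.
have : a \in [set c; d] by rewrite -E set21.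
have : b \in [set c; d] by rewrite -E set22.
have : c \in [set a; b] by rewrite E set21.
have : d \in [set a; b] by rewrite E set22.
rewrite !inE => /orP[]/eqP E1 /orP[]/eqP E2 /orP[]/eqP E3 /orP[]/eqP E4;
  subst; by [left | right].
Qed.

Definition adj G a b := [set a; b] \in G.2.

Lemma wf_adj G a b : wf_graph G -> adj G a b -> [/\ a \in G.1, b \in G.1 & a != b].
Proof.
move=> wf /wf [x [y [Hx Hy xy /eq_set2 [[-> ->]|[-> ->]]]]]; split=> //.
by rewrite eq_sym.
Qed.

Lemma graph_eq G H : wf_graph G -> wf_graph H -> G.1 = H.1 ->
  (forall a b, a != b -> adj G a b = adj H a b) -> G = H.
Proof.
case: G H => [V1 E1] [V2 E2] /= wG wH -> E; congr pair.
apply/setP=> e; apply/idP/idP => He.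
- have [x [y [_ _ xy ee]]] := wG e He; subst e.
  by have := E x y xy; rewrite /adj /= => <-.
- have [x [y [_ _ xy ee]]] := wH e He; subst e.
  by have := E x y xy; rewrite /adj /= => ->.
Qed.

Lemma in_nbhd G v b : wf_graph G -> (b \in nbhd G v) = (b != v) && adj G v b.
Proof.
move=> wG; rewrite /nbhd inE -/(adj G v b) andbA.
case: (boolP (adj G v b)) => A; last by rewrite !andbF.
by have [_ -> _] := wf_adj wG A.
Qed.

Lemma wf_Zop v G : wf_graph G -> wf_graph (Zop v G).
Proof.
move=> wG e; rewrite inE => /andP[He ve].
have [x [y [Hx Hy xy ee]]] := wG e He; subst e.
move: ve; rewrite !inE negb_or => /andP[vx vy].
by exists x, y; split=> //=; rewrite !inE ?Hx ?Hy andbT eq_sym.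
Qed.

Lemma adj_Zop v G a b : adj (Zop v G) a b = [&& adj G a b, a != v & b != v].
Proof.
by rewrite /adj /Zop /= inE !inE negb_or ![v == _]eq_sym andbA andbC andbA.
Qed.

Lemma in_clique (A : {set T}) a b : a != b ->
  ([set a; b] \in clique A) = (a \in A) && (b \in A).
Proof.
move=> ab; apply/imset2P/andP.
- case=> x y Hx; rewrite inE => /andP[Hy xy] /eq_set2 [[-> ->]|[-> ->]]; by split.
- by case=> Ha Hb; exists a b => //; rewrite inE Hb.
Qed.

Lemma clique_small (A : {set T}) : #|A| <= 1 -> clique A = set0.
Proof.
move=> A1; apply/setP=> e; rewrite inE; apply/imset2P => -[x y Hx].
rewrite inE => /andP[Hy /negP xy] _; apply: xy.
by apply/eqP; apply: (card_le1_eqP A1).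
Qed.

Lemma wf_LCop v G : wf_graph G -> wf_graph (LCop v G).
Proof.
move=> wG e; rewrite /LCop /symdiff /= !inE => /orP[]/andP[_ He].
- exact: wG.
- move/imset2P: He => [x y Hx]; rewrite inE => /andP[Hy xy] ->.
  move: Hx Hy; rewrite /nbhd !inE => /andP[Hx _] /andP[Hy _].
  by exists x, y.
Qed.

Lemma adj_LCop v G a b : wf_graph G -> a != b ->
  adj (LCop v G) a b = adj G a b (+) ((a \in nbhd G v) && (b \in nbhd G v)).
Proof.
move=> wG ab; rewrite /adj /LCop /symdiff /= in_setU !in_setD in_clique //.
by case: ([set a; b] \in G.2); case: ((a \in nbhd G v) && (b \in nbhd G v)).
Qed.

Lemma LCop_small v G : #|nbhd G v| <= 1 -> LCop v G = G.
Proof.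
case: G => V E /= /clique_small E0; rewrite /LCop /symdiff E0 /=.
by rewrite setD0 set0D setU0.
Qed.

Lemma adj_star (W : {set T}) r a b :
  adj (star W r) a b = ((a == r) && (b \in W :\ r)) || ((b == r) && (a \in W :\ r)).
Proof.
apply/imsetP/orP.
- case=> v vW /eq_set2 [[-> ->]|[-> ->]]; [left|right]; by rewrite eqxx.
- case=> /andP[/eqP -> bW]; first by exists b.
  by exists a => //; rewrite setUC.
Qed.

Lemma apply_ops_cat G o1 o2 : apply_ops G (o1 ++ o2) = apply_ops (apply_ops G o1) o2.
Proof. exact: foldl_cat. Qed.

Definition Xops (c : T -> T) h : seq (bool * T) :=
  [:: (true, c h); (true, h); (false, h); (true, c h)].

Lemma apply_ops_Xops (c : T -> T) G s :
  apply_ops G (flatten [seq Xops c h | h <- s]) = foldl (fun G h => Xop c h G) G s.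
Proof. by elim: s G => //= h s IH G; rewrite apply_ops_cat IH. Qed.

End Graphs.

(** * Depths and labels in a repeater tree *)

Section RepeaterTree.
Variable T : finType.
Variables (V : {set T}) (r : T) (par : T -> T) (g : T -> bool).
Hypothesis tree : repeater_tree V r par g.

Local Notation depth := (depth r par).
Local Notation leaf := (is_leaf V r par).

Lemma root_in : r \in V. Proof. by case: tree => [[]]. Qed.
Lemma par_root : par r = r. Proof. by case: tree => [[]]. Qed.
Lemma par_in v : v \in V -> par v \in V. Proof. by case: tree => [[_ _ + _]] *; apply. Qed.
Lemma g_root : g r. Proof. by case: tree => _ []. Qed.

Lemma iter_par_in k v : v \in V -> iter k par v \in V.
Proof. by move=> vV; elim: k => //= k; apply: par_in. Qed.

Lemma reach_root v : v \in V -> exists2 k, k < #|T| & iter k par v = r.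
Proof.
case: tree => [[_ _ _ reach]] _ _ _ _ vV.
have [n vr] := reach v vV.
have C : fconnect par v r by rewrite -vr fconnect_iter.
exists (findex par v r); last exact: iter_findex.
exact: leq_trans (findex_max C) (max_card _).
Qed.

Lemma depthP v : v \in V ->
  [/\ iter (depth v) par v = r, depth v < #|T| &
      forall k, iter k par v = r -> depth v <= k].
Proof.
move=> vV; have [k kT vr] := reach_root vV.
have [/eqP dr dk dmin] := @find_iota_min (fun n => iter n par v == r) #|T| k
  (ltnW kT) (introT eqP vr).
split=> [||j jr] //; first exact: leq_ltn_trans dk kT.
rewrite leqNgt; apply/negP => /dmin; by rewrite jr eqxx.
Qed.

Lemma depth_root : depth r = 0.
Proof. by rewrite /Defs.depth /= eqxx. Qed.

Lemma depth_par v : v \in V -> v != r -> depth (par v) = (depth v).-1 /\ 0 < depth v.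
Proof.
move=> vV vr; have [vd _ vmin] := depthP vV; have [pd _ pmin] := depthP (par_in vV).
have d0 : 0 < depth v by case: (depth v) vd => //= E; rewrite E eqxx in vr.
have := pmin (depth v).-1; rewrite -iterSr prednK // => /(_ vd).
by have := vmin _ (etrans (iterSr _ _ _) pd); lia.
Qed.

Lemma depth_iter k v : v \in V -> depth (iter k par v) = depth v - k.
Proof.
move=> vV; elim: k => [|k IH]; first by rewrite subn0.
rewrite iterS; have [E|ne] := eqVneq (iter k par v) r.
  by rewrite E par_root; rewrite E depth_root in IH *; lia.
by have [-> _] := depth_par (iter_par_in k vV) ne; lia.
Qed.

Lemma depth_parS v : v \in V -> v != r -> depth v = (depth (par v)).+1.
Proof. by move=> vV vr; have [-> ?] := depth_par vV vr; rewrite prednK. Qed.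

Lemma depth_par_leq v : v \in V -> depth (par v) <= depth v.
Proof.
move=> vV; have [->|vr] := eqVneq v r; first by rewrite par_root.
by rewrite (depth_parS vV vr).
Qed.

Lemma depth_iter_lt k v : v \in V -> iter k.+1 par v != r ->
  depth (iter k.+1 par v) < depth v.
Proof.
move=> vV ne; have [_] := depth_par (iter_par_in k.+1 vV) ne.
by rewrite depth_iter //; lia.
Qed.

Lemma par_neq v : v \in V -> v != r -> v != par v.
Proof.
move=> vV vr; apply/eqP => /(f_equal depth)/eqP.
by rewrite {1}(depth_parS vV vr) (gtn_eqF (ltnSn _)).
Qed.

Lemma size_path_labels l : size (path_labels r par g r l) = (depth l).+1.
Proof. by rewrite /path_labels size_rev size_map size_iota depth_root subn0. Qed.

Lemma nth_path_labels l j : j <= depth l ->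
  nth false (path_labels r par g r l) j = g (iter (depth l - j) par l).
Proof.
move=> jl; rewrite /path_labels depth_root subn0 nth_rev size_map size_iota //.
by rewrite (nth_map 0) ?size_iota ?nth_iota ?add0n ?subSS //; lia.
Qed.

Lemma path_labels_pattern l : l \in V -> leaf l ->
  rep_pattern (path_labels r par g r l).
Proof. by case: tree => _ _ + _ _; apply. Qed.

Lemma leaf_below u : u \in V -> exists l m,
  [/\ l \in V, leaf l, iter m par l = u & (~~ leaf u -> 0 < m)].
Proof.
move=> uV; have [n] := ubnP (#|T| - depth u).
elim: n u uV => // n IH u uV un.
have [lu|/set0Pn [v]] := boolP (leaf u); first by exists u, 0.
rewrite inE => /and3P[vV vr /eqP pv].
have [dv dv0] := depth_par vV vr; have [_ dvT _] := depthP vV.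
have [|l [m [lV ll lv _]]] := IH v vV; first by rewrite pv in dv; lia.
by exists l, m.+1; rewrite iterS lv pv.
Qed.

Lemma g_child_of_h h c : h \in V -> ~~ g h -> c \in V -> c != r -> par c = h -> g c.
Proof.
move=> hV gh cV cr pc.
have [l [m [lV ll lc _]]] := leaf_below cV.
have dl := depth_iter m lV; rewrite lc in dl.
have [dh dc] := depth_par cV cr; rewrite pc in dh.
have := @rep_pattern_after_h _ (depth h) (path_labels_pattern lV ll).
rewrite size_path_labels !nth_path_labels; try lia.
have -> : depth l - depth h = m.+1 by lia.
have -> : depth l - (depth h).+1 = m by lia.
by rewrite iterS lc pc gh; apply; lia.
Qed.

Lemma leaf_of_gg x : x \in V -> x != r -> g x -> g (par x) -> leaf x.
Proof.
move=> xV xr gx gp; apply/negPn/negP => /[dup] nl.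
have [l [m [lV ll lx /(_ nl) m0]]] := leaf_below xV.
have dl := depth_iter m lV; rewrite lx in dl.
have [dp dx] := depth_par xV xr.
have := @rep_pattern_gg_last _ (depth (par x)) (path_labels_pattern lV ll).
rewrite size_path_labels !nth_path_labels; try lia.
have -> : depth l - depth (par x) = m.+1 by lia.
have -> : depth l - (depth (par x)).+1 = m by lia.
by rewrite iterS lx gx gp => /(_ _ isT isT); lia.
Qed.

Lemma childP h : h \in V -> ~~ g h ->
  let c := child V r par h in
  [/\ c \in V, c != r, par c = h &
      forall v, v \in V -> v != r -> par v = h -> v = c].
Proof.
move=> hV gh /=; case: tree => _ _ _ one_child _.
have /eqP/cards1P [x Ex] := one_child h hV gh.
have -> : child V r par h = x.
  rewrite /child; case: pickP => [y|]; first by rewrite Ex inE => /eqP.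
  by move/(_ x); rewrite Ex set11.
have : x \in children V r par h by rewrite Ex set11.
rewrite inE => /and3P[xV xr /eqP px]; split=> // v vV vr pv.
have : v \in children V r par h by rewrite inE vV vr pv eqxx.
by rewrite Ex inE => /eqP.
Qed.

(** * The contracted tree *)

Definition absorbed (P : seq T) x := (x \in P) || ((x != r) && (par x \in P)).

Definition cpar P v :=
  iter (find (fun k => ~~ absorbed P (iter k par (par v))) (iota 0 #|T|.+1))
    par (par v).

(* A g-vertex whose parent is also g-type is a leaf, so it is never a strict ancestor. *)
Lemma absorbed_ancestor P x b k : b \in V -> x = iter k.+1 par b -> x != r ->
  (~~ g x -> x \in P) -> (~~ g (par x) -> par x \in P) -> absorbed P x.
Proof.
move=> bV xb xr Px Ppx; have xV : x \in V by rewrite xb iter_par_in.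
have [gx|/Px] := boolP (g x); last by rewrite /absorbed => ->.
have [gp|/Ppx] := boolP (g (par x)); last by rewrite /absorbed xr => ->; rewrite orbT.
have := leaf_of_gg xV xr gx gp; rewrite /is_leaf => /eqP/setP/(_ (iter k par b)).
rewrite inE in_set0 iter_par_in // -iterS -xb eqxx andbT /= => /negbFE/eqP E.
by move: xr; rewrite xb iterS E par_root eqxx.
Qed.

Section Contraction.
Variable P : seq T.
Hypothesis P_h : {in P, forall x, ~~ g x}.

Lemma absorbed_root : absorbed P r = false.
Proof. by rewrite /absorbed eqxx orbF; apply: contraTF g_root => /P_h. Qed.

Lemma cparP v : v \in V -> exists k,
  [/\ cpar P v = iter k par (par v), ~~ absorbed P (iter k par (par v)) &
      forall j, j < k -> absorbed P (iter j par (par v))].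
Proof.
move=> vV; have [pr pT _] := depthP (par_in vV).
have [] := @find_iota_min (fun k => ~~ absorbed P (iter k par (par v))) #|T|
  (depth (par v)) (ltnW pT); first by rewrite /= pr absorbed_root.
by move=> ? _ minP; eexists; split; last by move=> j /minP /negbNE.
Qed.

Lemma cpar_eq v k : v \in V -> ~~ absorbed P (iter k par (par v)) ->
  (forall j, j < k -> absorbed P (iter j par (par v))) ->
  cpar P v = iter k par (par v).
Proof.
move=> vV Nk Aj; have [k' [-> Nk' Aj']] := cparP vV.
by case: (ltngtP k k') => [/Aj'|/Aj|->] //; rewrite ?(negbTE Nk) ?(negbTE Nk').
Qed.

End Contraction.

Definition cadj P a b := [&& a \in V, a \notin P, b \in V, b \notin P &
  ((a != r) && (cpar P a == b)) || ((b != r) && (cpar P b == a))].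

Lemma cadjC P a b : cadj P a b = cadj P b a.
Proof. by rewrite /cadj orbC; do 4 case: (_ \in _). Qed.

Definition is_contraction P (G : graph T) := [/\ wf_graph G,
  G.1 = V :\: [set x | x \in P] & forall a b, a != b -> adj G a b = cadj P a b].

(** * One X-measurement *)

Section Step.
Variables (P : seq T) (h : T).
Hypothesis P_h : {in P, forall x, ~~ g x}.
Hypotheses (hV : h \in V) (gh : ~~ g h) (hP : h \notin P).
Hypothesis P_deeper : {in P, forall x, depth h <= depth x}.
Hypothesis P_below : {in V, forall x, ~~ g x -> depth h < depth x -> x \in P}.

Local Notation c := (child V r par h).
Local Notation p := (par h).
Local Notation P' := (rcons P h).

Let P'_h : {in P', forall x, ~~ g x}.
Proof. by move=> x; rewrite mem_rcons in_cons => /orP[/eqP->|/P_h]. Qed.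

Let hr : h != r. Proof. by apply: contraNneq gh => ->; exact: g_root. Qed.
Let cV : c \in V. Proof. by case: (childP hV gh). Qed.
Let cr : c != r. Proof. by case: (childP hV gh). Qed.
Let pc : par c = h. Proof. by case: (childP hV gh). Qed.
Let c_uniq v : v \in V -> v != r -> par v = h -> v = c.
Proof. by case: (childP hV gh) => _ _ _; apply. Qed.
Let gc : g c. Proof. exact: g_child_of_h hV gh cV cr pc. Qed.
Let cP : c \notin P. Proof. by apply: contraTN gc => /P_h. Qed.
Let dc : depth c = (depth h).+1. Proof. by rewrite (depth_parS cV cr) pc. Qed.
Let pV : p \in V. Proof. exact: par_in. Qed.
Let dh : depth h = (depth p).+1. Proof. exact: depth_parS. Qed.
Let pP : p \notin P. Proof. by apply/negP => /P_deeper; rewrite dh ltnn. Qed.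
Let absorbed_p : absorbed P p = false.
Proof.
rewrite /absorbed (negbTE pP) /=; apply/negP => /andP[_ /P_deeper].
by move/leq_trans/(_ (depth_par_leq pV)); rewrite dh ltnn.
Qed.
Let absorbed_h : absorbed P h = false.
Proof. by rewrite /absorbed (negbTE hP) (negbTE pP) andbF. Qed.
Let absorbed_c : absorbed P c = false.
Proof. by rewrite /absorbed (negbTE cP) pc (negbTE hP) andbF. Qed.
Let cpar_h : cpar P h = p. Proof. by rewrite (@cpar_eq P P_h h 0) //= absorbed_p. Qed.
Let cpar_c : cpar P c = h. Proof. by rewrite (@cpar_eq P P_h c 0) //= pc absorbed_h. Qed.
Let p_neq_h : p != h.
Proof. by apply/eqP => /(f_equal depth)/eqP; rewrite dh (ltn_eqF (ltnSn _)). Qed.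
Let c_neq_h : c != h.
Proof. by apply/eqP => /(f_equal depth)/eqP; rewrite dc (gtn_eqF (ltnSn _)). Qed.
Let p_neq_c : p != c.
Proof. by apply/eqP => /(f_equal depth)/eqP; rewrite dc dh (ltn_eqF (leqnSn _)). Qed.

Lemma cpar_eq_h b : b \in V -> cpar P b = h -> b = c.
Proof.
move=> bV; have [[|k] [-> _ Aj]] := cparP P_h bV => /= E.
  by apply: c_uniq => //; apply: contraNneq hr => br; rewrite -E br par_root.
have zV : iter k par (par b) \in V by apply/iter_par_in/par_in.
have zr : iter k par (par b) != r by apply: contraNneq hr => zr; rewrite -E zr par_root.
by have := Aj k (ltnSn k); rewrite (c_uniq zV zr E) absorbed_c.
Qed.

Definition below_c b := [&& b \in V, b \notin P, b != r & cpar P b == c].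

Lemma below_c_depth b : below_c b -> depth c < depth b.
Proof.
case/and4P => bV _ br /eqP; have [k [-> _ _]] := cparP P_h bV.
by rewrite -iterSr => E; rewrite -E depth_iter_lt // E.
Qed.

Lemma below_c_neq b : below_c b -> [/\ b != c, b != h & b != p].
Proof.
move=> /below_c_depth dcb; have dhb : depth h < depth b by rewrite (ltn_trans _ dcb) ?dc.
have dpb : depth p < depth b by rewrite (ltn_trans _ dhb) ?dh.
by split; [move: dcb | move: dhb | move: dpb]; apply: contraTneq => ->; rewrite ltnn.
Qed.

Lemma below_c_c : below_c c = false.
Proof. by apply: contraTF (eqxx c) => /below_c_neq[]. Qed.

(* Every h-vertex below c is processed, so the vertices hanging from c are leaves
   of the contracted tree. *)
Lemma cpar_neq_below_c a b : below_c a -> b \in V -> cpar P b != a.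
Proof.
move=> Sa bV; apply/eqP => E.
have da := below_c_depth Sa; move: Sa => /and4P[aV _ ar _].
have [k [E2 Nk _]] := cparP P_h bV.
move: Nk; rewrite -E2 E; apply/negP/negPn.
apply: (@absorbed_ancestor P a b k) => //; first by rewrite iterSr -E2 E.
- by move=> ga; apply: P_below => //; rewrite (ltn_trans _ da) ?dc.
- move=> gpa; apply: P_below => //; first exact: par_in.
  by rewrite -ltnS -(depth_parS aV ar) (leq_ltn_trans _ da) ?dc.
Qed.

Lemma cadj_c x : x != c -> cadj P c x = (x == h) || below_c x.
Proof.
move=> xc; rewrite /cadj /below_c cV cP cr cpar_c /=.
by case: (eqVneq x h) => [->|xh]; rewrite ?hV ?hP //= !andbA.
Qed.

Lemma cadj_h x : x != h -> cadj P h x = (x == p) || (x == c).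
Proof.
move=> xh; rewrite /cadj hV hP hr cpar_h /=.
case: (eqVneq x p) => [->|xp]; first by rewrite pV pP ?eqxx.
case: (eqVneq x c) => [->|xc]; first by rewrite cV cP cr cpar_c ?eqxx ?orbT.
case: (boolP (x \in V)) => //= xV; case: (x \in P) => //=.
by apply/negP => /andP[_ /eqP /(cpar_eq_h xV) E]; rewrite E eqxx in xc.
Qed.

Lemma cadj_below_c a x : below_c a -> x != a -> cadj P a x = (x == c).
Proof.
move=> Sa xa; move: (Sa) => /and4P[aV aP ar /eqP ca].
rewrite /cadj aV aP ar ca /=.
case: (eqVneq x c) => [->|xc]; first by rewrite cV cP ?eqxx.
case: (boolP (x \in V)) => //= xV; case: (x \in P) => //=.
by rewrite (negbTE (cpar_neq_below_c Sa xV)) andbF.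
Qed.

Lemma absorbed_rcons x : x \in V -> absorbed P' x = [|| absorbed P x, x == h | x == c].
Proof.
move=> xV; rewrite /absorbed !mem_rcons !in_cons.
case: (eqVneq x c) => [->|xc]; first by rewrite cr pc eqxx !orbT.
have -> : (x != r) && ((par x == h) || (par x \in P)) = (x != r) && (par x \in P).
  case: (eqVneq x r) => //= xr; case: (eqVneq (par x) h) => //= E.
  by rewrite (c_uniq xV xr E) eqxx in xc.
by case: (x == h); case: (x \in P); case: (_ && _).
Qed.

Lemma cpar_rcons_c : cpar P' c = p.
Proof.
rewrite (@cpar_eq P' P'_h c 1) //= ?pc //.
- by rewrite absorbed_rcons // absorbed_p (negbTE p_neq_h) (negbTE p_neq_c).
- by case=> // _; rewrite /= absorbed_rcons // eqxx orbT.
Qed.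

Lemma cpar_rcons_below_c x : below_c x -> cpar P' x = p.
Proof.
move=> Sx; move: (Sx) => /and4P[xV _ _ /eqP cx].
have [k [E Nk Aj]] := cparP P_h xV; rewrite E in cx.
have iV j : iter j par (par x) \in V by apply/iter_par_in/par_in.
rewrite (@cpar_eq P' P'_h x k.+2) //.
- by rewrite !iterS cx pc.
- by rewrite !iterS cx pc absorbed_rcons // absorbed_p (negbTE p_neq_h) (negbTE p_neq_c).
- move=> j jk; rewrite absorbed_rcons //; case: (ltngtP j k) => [/Aj -> //| |->].
  + move=> kj; have -> : j = k.+1 by apply/eqP; rewrite eqn_leq -ltnS jk kj.
    by rewrite iterS cx pc eqxx orbT.
  + by rewrite cx eqxx !orbT.
Qed.

Lemma cpar_rcons_other x : x \in V -> x \notin P -> x != r -> x != c -> ~~ below_c x ->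
  cpar P' x = cpar P x.
Proof.
move=> xV xP xr xc Sx; have [k [E Nk Aj]] := cparP P_h xV.
have iV j : iter j par (par x) \in V by apply/iter_par_in/par_in.
rewrite E (@cpar_eq P' P'_h x k) //.
- rewrite absorbed_rcons // (negbTE Nk) /=; apply/norP; split; apply/eqP => E2.
  + by rewrite -E in E2; rewrite (cpar_eq_h xV E2) eqxx in xc.
  + by move: Sx; rewrite /below_c xV xP xr E E2 eqxx.
- by move=> j jk; rewrite absorbed_rcons ?Aj.
Qed.

Definition other x := [&& x != h, x != c & ~~ below_c x].

Lemma notin_rcons x : (x \notin P') = (x != h) && (x \notin P).
Proof. by rewrite mem_rcons in_cons negb_or. Qed.

Lemma cadj_rcons_other a b : other a -> other b -> cadj P' a b = cadj P a b.
Proof.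
move=> /and3P[ah ac Sa] /and3P[bh bc Sb].
rewrite /cadj !notin_rcons ah bh /=.
case: (boolP (a \in V)) => //= aV; case: (boolP (a \in P)) => //= aP.
case: (boolP (b \in V)) => //= bV; case: (boolP (b \in P)) => //= bP.
by case: (eqVneq a r) => [_|ar] /=; case: (eqVneq b r) => [_|br] //=;
  rewrite ?cpar_rcons_other.
Qed.

Lemma cadj_rcons_c_other b : other b -> cadj P' c b = (b == p).
Proof.
move=> /and3P[bh bc Sb]; rewrite /cadj !notin_rcons cV c_neq_h cP bh cr cpar_rcons_c /=.
case: (eqVneq b p) => [->|bp]; first by rewrite pV pP ?eqxx.
case: (boolP (b \in V)) => //= bV; case: (boolP (b \in P)) => //= bP.
case: (eqVneq b r) => //= br; rewrite cpar_rcons_other //.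
by apply: contraNF Sb => /eqP cb; rewrite /below_c bV bP br cb eqxx.
Qed.

Lemma cadj_rcons_below_c_other a b : below_c a -> other b -> cadj P' a b = (b == p).
Proof.
move=> Sa /and3P[bh bc Sb]; have [_ ah _] := below_c_neq Sa.
move: (Sa) => /and4P[aV aP ar _].
rewrite /cadj !notin_rcons aV ah aP bh ar cpar_rcons_below_c //=.
case: (eqVneq b p) => [->|bp]; first by rewrite pV pP ?eqxx.
case: (boolP (b \in V)) => //= bV; case: (boolP (b \in P)) => //= bP.
case: (eqVneq b r) => //= br; rewrite cpar_rcons_other //.
by rewrite (negbTE (cpar_neq_below_c Sa bV)).
Qed.

Lemma cadj_rcons_c_below_c b : below_c b -> cadj P' c b = false.
Proof.
move=> Sb; have [bc bh bp] := below_c_neq Sb; move: (Sb) => /and4P[_ _ br _].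
rewrite /cadj cpar_rcons_c cpar_rcons_below_c // [p == b]eq_sym (negbTE bp).
by rewrite (negbTE p_neq_c) !andbF.
Qed.

Lemma cadj_rcons_below_c2 a b : below_c a -> below_c b -> cadj P' a b = false.
Proof.
move=> Sa Sb; have [_ _ bp] := below_c_neq Sb; have [_ _ ap] := below_c_neq Sa.
rewrite /cadj !cpar_rcons_below_c // [p == b]eq_sym (negbTE bp) [p == a]eq_sym.
by rewrite (negbTE ap) !andbF.
Qed.

(* Away from h, [below_c] and [around_h] are the neighbourhoods complemented by LC_c and LC_h. *)
Definition around_h x := [|| x == p, x == c | below_c x].

Lemma cadj_rcons a b : a != b -> a != h -> b != h ->
  cadj P' a b = cadj P a b (+) (below_c a && below_c b) (+) (around_h a && around_h b).
Proof.
have around_h_c : around_h c by rewrite /around_h eqxx orbT.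
have around_h_below_c x : below_c x -> around_h x by rewrite /around_h => ->; rewrite !orbT.
have around_h_other x : other x -> around_h x = (x == p).
  by case/and3P => _ xc Sx; rewrite /around_h (negbTE xc) (negbTE Sx) !orbF.
suff roles x y : x != y -> x != h -> y != h -> (x == c) || below_c x ->
  cadj P' x y = cadj P x y (+) (below_c x && below_c y) (+) (around_h x && around_h y).
- move=> ab ah bh; have [|xo] := boolP ((a == c) || below_c a); first exact: roles.
  have [|yo] := boolP ((b == c) || below_c b).
    by move=> ?; rewrite cadjC [cadj P a b]cadjC andbC [around_h a && _]andbC roles // eq_sym.
  have [oa ob] : other a /\ other b by rewrite /other ah bh -!negb_or.
  rewrite cadj_rcons_other // (around_h_other _ oa) (around_h_other _ ob).
  have Sa : below_c a = false by case/and3P: oa => _ _ /negbTE.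
  have ab_p : (a == p) && (b == p) = false by apply: contraNF ab => /andP[/eqP-> /eqP->].
  by rewrite Sa ab_p /= !addbF.
move=> xy xh yh /orP[/eqP xc | Sx].
- subst x; rewrite eq_sym in xy.
  rewrite cadj_c // below_c_c around_h_c (negbTE yh) /= addbF.
  have [Sy|Sy] := boolP (below_c y).
    by rewrite cadj_rcons_c_below_c // (around_h_below_c _ Sy).
  have oy : other y by rewrite /other yh xy Sy.
  by rewrite cadj_rcons_c_other // (around_h_other _ oy).
- rewrite cadj_below_c 1?eq_sym // Sx (around_h_below_c _ Sx) /=.
  have [->|yc] := eqVneq y c.
    by rewrite below_c_c around_h_c cadjC cadj_rcons_c_below_c.
  have [Sy|Sy] := boolP (below_c y).
    by rewrite cadj_rcons_below_c2 // (around_h_below_c _ Sy).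
  have oy : other y by rewrite /other yh yc Sy.
  by rewrite cadj_rcons_below_c_other // (around_h_other _ oy).
Qed.

Lemma cadj_rcons_h x : cadj P' h x = false.
Proof. by rewrite /cadj notin_rcons eqxx andbF. Qed.

Lemma cadj_rcons_c x : cadj P' c x -> x = p.
Proof.
have [->|xh] := eqVneq x h; first by rewrite cadjC cadj_rcons_h.
have [->|xc] := eqVneq x c; first by rewrite /cadj cpar_rcons_c (negbTE p_neq_c) !andbF.
have [Sx|Sx] := boolP (below_c x); first by rewrite cadj_rcons_c_below_c.
have ox : other x by rewrite /other xh xc Sx.
by rewrite cadj_rcons_c_other // => /eqP.
Qed.

Lemma contraction_X G : is_contraction P G -> is_contraction P' (Xop (child V r par) h G).
Proof.
case=> wG G_V G_adj.
set G1 := LCop c G; set G2 := LCop h G1; set G3 := Zop h G2.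
have wG1 : wf_graph G1 by apply: wf_LCop.
have wG3 : wf_graph G3 by apply/wf_Zop/wf_LCop.
have nbhd_c x : (x \in nbhd G c) = (x == h) || below_c x.
  rewrite in_nbhd //; have [->|xc] := eqVneq x c; first by rewrite (negbTE c_neq_h) below_c_c.
  by rewrite G_adj ?cadj_c // eq_sym.
have adj_G1 a b : a != b ->
    adj G1 a b = cadj P a b (+) (((a == h) || below_c a) && ((b == h) || below_c b)).
  by move=> ab; rewrite adj_LCop // G_adj // !nbhd_c.
have nbhd_h x : (x \in nbhd G1 h) = around_h x.
  rewrite in_nbhd // /around_h; have [->|xh] := eqVneq x h.
    rewrite [h == p]eq_sym [h == c]eq_sym (negbTE p_neq_h) (negbTE c_neq_h) /=.
    by apply/esym/negP => /below_c_neq[_]; rewrite eqxx.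
  rewrite /= adj_G1; last by rewrite eq_sym.
  rewrite cadj_h // eqxx (negbTE xh) /=.
  by have [/below_c_neq[/negbTE-> _ /negbTE->]|_] := boolP (below_c x);
    rewrite ?addbF ?orbF.
have adj_G3 a b : a != b -> adj G3 a b = cadj P' a b.
  move=> ab; rewrite adj_Zop adj_LCop // adj_G1 // !nbhd_h.
  have [->|ah] := eqVneq a h; first by rewrite cadj_rcons_h andbF.
  have [->|bh] := eqVneq b h; first by rewrite [cadj P' a h]cadjC cadj_rcons_h !andbF.
  by rewrite cadj_rcons //= andbT.
have -> : Xop (child V r par) h G = G3.
  apply: LCop_small; rewrite -(cards1 p); apply/subset_leq_card/subsetP => x.
  rewrite in_nbhd // => /andP[xc]; rewrite adj_G3 1?eq_sym // => /cadj_rcons_c ->.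
  exact: set11.
split=> //.
by rewrite /= G_V; apply/setP => x; rewrite !inE mem_rcons in_cons negb_or andbA.
Qed.

End Step.

Lemma cpar_nil v : cpar [::] v = par v.
Proof. by rewrite /cpar (@find_iota_eq _ _ 0) // /absorbed !in_nil andbF. Qed.

Lemma contraction_tree : is_contraction [::] (tree_graph V r par).
Proof.
split.
- move=> e /imsetP [v]; rewrite inE => /andP[vV vr] ->.
  by exists v, (par v); split; rewrite ?par_in ?par_neq.
- by apply/setP => x; rewrite !inE in_nil.
- move=> a b ab; rewrite /adj /cadj !cpar_nil /=.
  apply/imsetP/idP.
  + case=> v; rewrite inE => /andP[vV vr] /eq_set2 [[-> ->]|[-> ->]];
      by rewrite vV par_in // vr eqxx ?orbT.
  + case/and3P => aV bV /orP[/andP[ar /eqP <-]|/andP[br /eqP <-]].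
    * by exists a; rewrite ?inE ?aV.
    * by exists b; rewrite ?inE ?bV // setUC.
Qed.

Section Processed.
Variable P : seq T.
Hypothesis P_h : forall x, (x \in P) = (x \in V) && ~~ g x.

Lemma cpar_processed v : v \in V -> cpar P v = r.
Proof.
move=> vV; have P_h' : {in P, forall x, ~~ g x} by move=> x; rewrite P_h => /andP[].
have [k [-> Nk _]] := cparP P_h' vV.
apply/eqP; apply: contraNT Nk => kr; apply: (@absorbed_ancestor P _ v k) => //.
- by rewrite iterSr.
- by move=> gk; rewrite P_h gk iter_par_in // par_in.
- by move=> gk; rewrite P_h gk !par_in // iter_par_in // par_in.
Qed.

Lemma contraction_processed G : is_contraction P G -> G = star [set v in V | g v] r.
Proof.
case=> wG G_V G_adj; apply: graph_eq => //.
- move=> e /imsetP [v]; rewrite !inE => /andP[vr /andP[vV gv]] ->.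
  by exists r, v; split; rewrite ?inE ?root_in ?g_root ?vV ?gv // eq_sym.
- by rewrite G_V; apply/setP => x; rewrite !inE P_h; case: (x \in V); case: (g x).
- move=> a b ab; rewrite G_adj // adj_star /cadj !P_h.
  have [aV|aV] := boolP (a \in V); last first.
    have -> : (a == r) = false by apply: contraNF aV => /eqP->; exact: root_in.
    by rewrite !inE (negbTE aV) /= !andbF.
  have [bV|bV] := boolP (b \in V); last first.
    have -> : (b == r) = false by apply: contraNF bV => /eqP->; exact: root_in.
    by rewrite !inE (negbTE bV) /= !andbF.
  rewrite !cpar_processed // !inE aV bV /= !negbK.
  by case: (eqVneq a r) => [->|ar]; case: (eqVneq b r) => [->|br] //=;
    rewrite ?g_root ?andbT ?andbF ?orbF.
Qed.

End Processed.

Lemma contraction_foldl s1 s2 G : is_contraction s1 G -> uniq (s1 ++ s2) ->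
  (forall x, (x \in s1 ++ s2) = (x \in V) && ~~ g x) ->
  pairwise (fun a b => ~~ (depth a < depth b)) (s1 ++ s2) ->
  is_contraction (s1 ++ s2) (foldl (fun G h => Xop (child V r par) h G) G s2).
Proof.
elim: s2 s1 G => [|h s2 IH] s1 G I; first by rewrite cats0.
move=> U Hs Pw /=; rewrite -cat_rcons; apply: IH; rewrite ?cat_rcons //.
have /andP[hV gh] : (h \in V) && ~~ g h by rewrite -Hs mem_cat in_cons eqxx orbT.
move: U; rewrite cat_uniq => /and3P[_ /hasPn hn _].
move: Pw; rewrite pairwise_cat pairwise_cons => /and3P[/allrelP A _ /andP[/allP B _]].
apply: contraction_X => //.
- by move=> x xs; have := Hs x; rewrite mem_cat xs /= => /esym/andP[].
- by apply: hn; rewrite in_cons eqxx.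
- by move=> x xs; have := A x h xs; rewrite in_cons eqxx -leqNgt => /(_ isT).
- move=> x xV gx dx; have := Hs x.
  rewrite xV gx mem_cat in_cons => /orP[//|/orP[/eqP E|xs2]].
    by rewrite E ltnn in dx.
  by have := B x xs2; rewrite dx.
Qed.

End RepeaterTree.

Theorem theorem2 (T : finType) (V : {set T}) (r : T) (par : T -> T) (g : T -> bool)
    (s : seq T) :
  repeater_tree V r par g ->
  uniq s ->
  (forall h, (h \in s) = (h \in V) && ~~ g h) ->
  pairwise (fun a b => ~~ (depth r par a < depth r par b)) s ->
  foldl (fun G h => Xop (child V r par) h G) (tree_graph V r par) s
    = star [set v in V | g v] r /\
  (forall G : graph T, wf_graph G -> vertex_minor (tree_graph V r par) G ->
     vertex_minor (star [set v in V | g v] r) G).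
Proof.
move=> tree s_uniq s_h s_depth.
have star_eq : foldl (fun G h => Xop (child V r par) h G) (tree_graph V r par) s
    = star [set v in V | g v] r.
  apply: (contraction_processed tree s_h).
  exact: (@contraction_foldl _ _ _ _ _ tree [::] s _ (contraction_tree tree)).
split=> // G _ [ops G_tree].
exists (ops ++ flatten [seq Xops (child V r par) h | h <- s]).
by rewrite apply_ops_cat G_tree apply_ops_Xops.
Qed.
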